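(* Let $\mathbb{X}\subseteq\mathbb{P}^2$ be a $\Bbbk$-configuration of type $(1,2,\dots,s)$ with $s\ge2$, defined by subsets $\mathbb{X}_1,\dots,\mathbb{X}_s$ and lines $\mathbb{L}_1,\dots,\mathbb{L}_s$, with $\mathbb{X}_1=\{P\}$, and suppose that no line of $\mathbb{P}^2$ passing through $P$ contains $s$ points of $\mathbb{X}$. Suppose coordinates are chosen so that $P=[1:0:0]$ and $\mathbb{X}_2=\{[0:1:0],[0:0:1]\}$. Let $\mathbb{Y}=\mathbb{X}_2\cup\cdots\cup\mathbb{X}_s=\mathbb{X}\setminus\{P\}$. Then for all integers $m\ge s+1$, $\mathbf{H}_{R/(I_{m\mathbb{Y}}+I_P^m)}(ms-2)=0$, i.e. $(I_{m\mathbb{Y}}+I_P^m)_{ms-2}=R_{ms-2}$.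
   Context: $\Bbbk$ is an algebraically closed field and $R=\Bbbk[x_0,x_1,x_2]$. A $\Bbbk$-configuration of type $(d_1,\dots,d_s)$ is a finite set $\mathbb{X}\subseteq\mathbb{P}^2$ for which there exist integers $1\le d_1<\cdots<d_s$, subsets $\mathbb{X}_1,\dots,\mathbb{X}_s$ of $\mathbb{X}$ and distinct lines $\mathbb{L}_1,\dots,\mathbb{L}_s\subseteq\mathbb{P}^2$ such that (1) $\mathbb{X}=\bigcup_{i=1}^s\mathbb{X}_i$; (2) $|\mathbb{X}_i|=d_i$ and $\mathbb{X}_i\subseteq\mathbb{L}_i$ for each $i$; (3) for $1<i\le s$, $\mathbb{L}_i$ contains no point of $\mathbb{X}_j$ for any $j<i$. $I_P\subseteq R$ denotes the ideal of a point $P$ (so $I_{[1:0:0]}=\langle x_1,x_2\rangle$); for a finite set $\mathbb{Y}=\{Q_1,\dots,Q_n\}$, $I_{m\mathbb{Y}}=I_{Q_1}^m\cap\cdots\cap I_{Q_n}^m$. For a homogeneous ideal $I$, $\mathbf{H}_{R/I}(t)=\dim_\Bbbk R_t-\dim_\Bbbk I_t$. *)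

(* R = k[x0,x1,x2] is modelled as nested univariate
   polynomials {poly {poly {poly K}}}: innermost variable x0, then x1,
   outermost x2. *)
From HB Require Import structures.
From mathcomp Require Import all_boot all_order all_algebra all_field.
Set Implicit Arguments. Unset Strict Implicit. Unset Printing Implicit Defensive.
Import Order.TTheory GRing.Theory Num.Theory.
Local Open Scope ring_scope.

Section Defs.
Variable K : closedFieldType.

Definition mpoly := {poly {poly {poly K}}}.

Definition mcoef (p : mpoly) (i j k : nat) : K := ((p`_k)`_j)`_i.

(* p is a homogeneous form of degree d (0 counts as homogeneous) *)
Definition homog (d : nat) (p : mpoly) : Prop :=
  forall i j k, mcoef p i j k != 0 -> (i + j + k)%N = d.

(* homogeneous coordinates (q0,q1,q2) of a point of P^2 *)
Definition pt := (K * K * K)%type.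
Definition c0 (q : pt) := q.1.1.
Definition c1 (q : pt) := q.1.2.
Definition c2 (q : pt) := q.2.

Definition heval (q : pt) (p : mpoly) : K :=
  (p.[(c2 q)%:P%:P]).[(c1 q)%:P].[c0 q].

Definition nzpt (q : pt) : Prop := ~ (c0 q = 0 /\ c1 q = 0 /\ c2 q = 0).

Definition proj_eq (u v : pt) : Prop :=
  exists t : K, t != 0 /\ c0 u = t * c0 v /\ c1 u = t * c1 v /\ c2 u = t * c2 v.

Definition on_line (l q : pt) : bool :=
  c0 l * c0 q + c1 l * c1 q + c2 l * c2 q == 0.

Definition gen_ideal (S : mpoly -> Prop) (F : mpoly) : Prop :=
  exists s : seq (mpoly * mpoly),
    F = \sum_(x <- s) x.1 * x.2 /\ (forall x, x \in s -> S x.2).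

Definition ideal_pow (I : mpoly -> Prop) (m : nat) (F : mpoly) : Prop :=
  gen_ideal (fun g => exists fs : seq mpoly,
     size fs = m /\ (forall f, f \in fs -> I f) /\ g = \prod_(f <- fs) f) F.

Definition ideal_pt (q : pt) : mpoly -> Prop :=
  gen_ideal (fun h => exists d, homog d h /\ heval q h = 0).

Definition ideal_fat (m : nat) (Y : seq pt) (F : mpoly) : Prop :=
  forall q, q \in Y -> ideal_pow (ideal_pt q) m F.

Definition ideal_add (I J : mpoly -> Prop) (F : mpoly) : Prop :=
  exists A B, F = A + B /\ I A /\ J B.

Definition distinct_pts (xs : seq pt) : Prop :=
  (forall q, q \in xs -> nzpt q) /\
  (forall i j, (i < size xs)%N -> (j < size xs)%N -> i <> j ->
     ~ proj_eq (nth (0,0,0) xs i) (nth (0,0,0) xs j)).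

End Defs.

(* Write J = I_{mY} + I_P^m and weigh the monomial x0^a x1^b x2^c by b + c, its order of
   vanishing at P = [1:0:0].  Monomials of weight at least m lie in I_P^m.  For smaller weight,
   multiply x1^b x2^c by a form H = x0^p + (terms of positive weight) made of powers of the lines
   L_i: the product vanishes to order m on Y, hence lies in J, and the correction terms have
   larger weight, so x0^p x1^b x2^c lies in J by downward induction.  With L_2^m ... L_s^m this
   reaches every monomial of degree ms - 2 except those of weight m - 1, where one power of x0 is
   missing.  For those, L_2 is used only m - 1 times, which suffices when b, c > 0 because x1 x2
   vanishes on X_2 = {[0:1:0], [0:0:1]}.  For x1^(m-1) the line x2 = 0 through P and [0:1:0]
   contains fewer than s points of X, so it misses some layer X_k with k >= 3; replacing x1^(k-1)
   by the lines joining P to all but one point Q of X_k, and L_2 L_k by the line joining Q to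
   [0:1:0], gives a form of the right degree whose x1^(m-1) term is nonzero; its other terms have
   b, c > 0.  The monomial x2^(m-1) is symmetric. *)

From HB Require Import structures.
From mathcomp Require Import all_boot all_order all_algebra all_field.
From mathcomp Require Import ring zify.
Import Order.TTheory GRing.Theory Num.Theory.
Local Open Scope ring_scope.
Set Implicit Arguments. Unset Strict Implicit. Unset Printing Implicit Defensive.

Section Plane.
Variable K : closedFieldType.
Local Notation R := (mpoly K).
Implicit Types (q l : pt K) (A B F H f g r : R) (S : R -> Prop).

Lemma gen_ideal0 S : gen_ideal S 0.
Proof. by exists [::]; rewrite big_nil. Qed.

Lemma gen_idealD S A B : gen_ideal S A -> gen_ideal S B -> gen_ideal S (A + B).
Proof.
move=> [sA [-> SA]] [sB [-> SB]]; exists (sA ++ sB); split; first by rewrite big_cat.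
by move=> x; rewrite mem_cat => /orP[/SA|/SB].
Qed.

Lemma gen_idealMl S r A : gen_ideal S A -> gen_ideal S (r * A).
Proof.
move=> [sA [-> SA]]; exists [seq (r * x.1, x.2) | x <- sA]; split.
  by rewrite big_map mulr_sumr; apply: eq_bigr => x _; rewrite mulrA.
by move=> x /mapP [y /SA Sy ->].
Qed.

Lemma gen_idealMr S A r : gen_ideal S A -> gen_ideal S (A * r).
Proof. by rewrite mulrC; apply: gen_idealMl. Qed.

Lemma mem_gen_ideal S g : S g -> gen_ideal S g.
Proof. by move=> Sg; exists [:: (1, g)]; rewrite big_seq1 mul1r; split=> // x /[!inE] /eqP->. Qed.

Lemma gen_ideal_min S (I : R -> Prop) :
  I 0 -> (forall A B, I A -> I B -> I (A + B)) -> (forall r A, I A -> I (r * A)) ->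
  (forall g, S g -> I g) -> forall A, gen_ideal S A -> I A.
Proof.
move=> I0 ID IM IS A [sA [-> SA]]; elim: sA SA => [|x sA IH] SA; first by rewrite big_nil.
rewrite big_cons; apply: ID; first by apply/IM/IS/SA; rewrite mem_head.
by apply: IH => y ys; apply: SA; rewrite in_cons ys orbT.
Qed.

Lemma gen_idealM S1 S2 S A B : gen_ideal S1 A -> gen_ideal S2 B ->
  (forall f g, S1 f -> S2 g -> S (f * g)) -> gen_ideal S (A * B).
Proof.
move=> S1A S2B S12; pose I A := gen_ideal S (A * B).
apply: (@gen_ideal_min S1 I) S1A => [|A1 A2|r A1|f S1f]; rewrite /I.
- by rewrite mul0r; apply: gen_ideal0.
- by rewrite mulrDl; apply: gen_idealD.
- by rewrite -mulrA; apply: gen_idealMl.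
pose I' B := gen_ideal S (f * B).
apply: (@gen_ideal_min S2 I') S2B => [|B1 B2|r B1|g S2g]; rewrite /I'.
- by rewrite mulr0; apply: gen_ideal0.
- by rewrite mulrDr; apply: gen_idealD.
- by rewrite mulrCA; apply: gen_idealMl.
by apply/mem_gen_ideal/S12.
Qed.

Lemma gen_ideal_prod S (T : eqType) (F : T -> R) (rs : seq T) x :
  x \in rs -> gen_ideal S (F x) -> gen_ideal S (\prod_(y <- rs) F y).
Proof. by move=> xr SFx; rewrite (big_rem x xr); apply: gen_idealMr. Qed.

Lemma ideal_pow_prod (I : R -> Prop) fs :
  (forall f, f \in fs -> I f) -> ideal_pow I (size fs) (\prod_(f <- fs) f).
Proof. by move=> Ifs; apply: mem_gen_ideal; exists fs. Qed.

Lemma prod_nseq n f : \prod_(g <- nseq n f) g = f ^+ n.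
Proof. by elim: n => [|n IH]; rewrite ?big_nil // big_cons IH exprS. Qed.

Lemma ideal_pow_mulX (I : R -> Prop) n g f :
  (0 < n)%N -> I g -> I f -> ideal_pow I n (g * f ^+ n.-1).
Proof.
case: n => // n _ Ig If; have := @ideal_pow_prod I (g :: nseq n f).
rewrite /= size_nseq big_cons prod_nseq; apply=> h /[!inE] /orP[/eqP->//|].
by rewrite mem_nseq => /andP[_ /eqP->].
Qed.

Lemma ideal_pow_XX (I : R -> Prop) n k f g :
  (k <= n)%N -> I f -> I g -> ideal_pow I n (f ^+ k * g ^+ (n - k)).
Proof.
move=> kn If Ig; have := @ideal_pow_prod I (nseq k f ++ nseq (n - k) g).
rewrite size_cat !size_nseq subnKC // big_cat !prod_nseq; apply=> h.
by rewrite mem_cat !mem_nseq => /orP[]/andP[_ /eqP->].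
Qed.

Definition x0 : R := ('X : {poly K})%:P%:P.
Definition x1 : R := ('X : {poly {poly K}})%:P.
Definition x2 : R := 'X.
Definition cst (a : K) : R := a%:P%:P%:P.
Definition lin l : R := cst (c0 l) * x0 + cst (c1 l) * x1 + cst (c2 l) * x2.
Definition mon (a b c : nat) : R := x0 ^+ a * x1 ^+ b * x2 ^+ c.

Lemma cstM a b : cst (a * b) = cst a * cst b.
Proof. by rewrite /cst !polyCM. Qed.

Lemma cst1 : cst 1 = 1.
Proof. by rewrite /cst !polyC1. Qed.

Lemma cst0 : cst 0 = 0.
Proof. by rewrite /cst !polyC0. Qed.

Lemma cstD a b : cst (a + b) = cst a + cst b.
Proof. by rewrite /cst !polyCD. Qed.

Lemma cstN a : cst (- a) = - cst a.
Proof. by rewrite /cst !polyCN. Qed.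

Lemma monM a b c a' b' c' : mon a b c * mon a' b' c' = mon (a + a') (b + b') (c + c').
Proof. by rewrite /mon !exprD; ring. Qed.

Lemma x0X_mon n a b c : x0 ^+ n * mon a b c = mon (n + a) b c.
Proof. by rewrite /mon exprD; ring. Qed.

Lemma heval_lin q l : heval q (lin l) = c0 l * c0 q + c1 l * c1 q + c2 l * c2 q.
Proof. by rewrite /heval /lin /cst /x0 /x1 /x2 !hornerE. Qed.

Lemma on_lineE l q : on_line l q = (heval q (lin l) == 0).
Proof. by rewrite heval_lin. Qed.

Lemma heval_lin_proj q (p : pt K) l : proj_eq q p -> heval p (lin l) = 0 -> heval q (lin l) = 0.
Proof.
move=> [t [_ [q0 [q1 q2]]]]; rewrite !heval_lin q0 q1 q2 => lp0.
by rewrite -[RHS](mulr0 t) -lp0; ring.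
Qed.

Lemma homog_lin l : homog 1 (lin l).
Proof.
move=> i j k; rewrite /mcoef /lin /cst /x0 /x1 /x2 !coefD !coefCM coefX !coefC.
case: k => [|[|k]] /=; rewrite ?coef0 ?coef1 ?coefC ?coefX ?coef0;
 case: j => [|[|j]] /=; rewrite ?coef0 ?coef1 ?coefC ?coefX ?coef0;
 case: i => [|[|i]] /=; rewrite ?mulr0 ?mulr1 ?addr0 ?add0r ?eqxx //.
Qed.

Lemma ideal_pt_lin q l : heval q (lin l) = 0 -> ideal_pt q (lin l).
Proof. by move=> ql0; apply: mem_gen_ideal; exists 1%N; split; [apply: homog_lin|]. Qed.

(* The coefficients of the line through p and q: their cross product. *)
Definition cross (p q : pt K) : pt K :=
  (c1 p * c2 q - c2 p * c1 q, c2 p * c0 q - c0 p * c2 q, c0 p * c1 q - c1 p * c0 q).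

Lemma heval_cross_l (p q : pt K) : heval p (lin (cross p q)) = 0.
Proof. by rewrite heval_lin /cross /c0 /c1 /c2 /=; ring. Qed.

Lemma heval_cross_r (p q : pt K) : heval q (lin (cross p q)) = 0.
Proof. by rewrite heval_lin /cross /c0 /c1 /c2 /=; ring. Qed.

(* Read as a line, [coord_pt true] = [0:1:0] is x1 = 0 and [coord_pt false] = [0:0:1] is x2 = 0. *)
Definition coord_pt (b : bool) : pt K := if b then (0, 1, 0) else (0, 0, 1).

Lemma lin_coord_pt b : lin (coord_pt b) = if b then x1 else x2.
Proof. by case: b; rewrite /lin /= cst0 cst1; ring. Qed.

Lemma heval_coord_pt b b' : heval (coord_pt b') (lin (coord_pt b)) = (b == b')%:R.
Proof. by rewrite heval_lin; case: b; case: b'; rewrite /c0 /c1 /c2 /=; ring. Qed.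

Lemma lin_coord_ptMN b : lin (coord_pt b) * lin (coord_pt (~~ b)) = x1 * x2.
Proof. by rewrite !lin_coord_pt; case: b => //=; rewrite mulrC. Qed.

Lemma nzpt_coord_pt b : nzpt (coord_pt b).
Proof.
have := oner_neq0 K; rewrite /nzpt /c0 /c1 /c2.
by case: b => /= + [_ [e1 e2]]; [rewrite e1 | rewrite e2]; rewrite eqxx.
Qed.

Lemma lin_cross_e0 (b : bool) q : lin (cross (1, 0, 0) q) =
  cst ((-1) ^+ b * heval q (lin (coord_pt (~~ b)))) * lin (coord_pt b)
  + lin (coord_pt (~~ b)) * cst (- ((-1) ^+ b * heval q (lin (coord_pt b)))).
Proof.
rewrite !heval_lin /lin /cross /c0 /c1 /c2.
by case: b; rewrite /= ?expr1 ?expr0 !(cstM, cstD, cstN, cst0, cst1); ring.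
Qed.

Lemma c0_cross_coord_pt (b : bool) q :
  c0 (cross q (coord_pt b)) = (-1) ^+ b * heval q (lin (coord_pt (~~ b))).
Proof. by rewrite heval_lin /cross /c0 /c1 /c2; case: b; rewrite /= ?expr1 ?expr0; ring. Qed.

(* The weight [b + c] of [mon a b c] is its order of vanishing at [1:0:0]. *)
Definition mon_ideal (e o : nat) : R -> Prop :=
  gen_ideal (fun g => exists a b c, [/\ (a + b + c = e)%N, (o <= b + c)%N & g = mon a b c]).

Lemma mon_ideal_mon e o a b c : (a + b + c = e)%N -> (o <= b + c)%N -> mon_ideal e o (mon a b c).
Proof. by move=> abce obc; apply: mem_gen_ideal; exists a, b, c. Qed.

Lemma mon_idealM e1 o1 e2 o2 e o A B : mon_ideal e1 o1 A -> mon_ideal e2 o2 B ->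
  (e1 + e2 = e)%N -> (o <= o1 + o2)%N -> mon_ideal e o (A * B).
Proof.
move=> MA MB ee oo; apply: (gen_idealM MA MB).
move=> _ _ [a [b [c [h1 h2 ->]]]] [a' [b' [c' [h1' h2' ->]]]].
by rewrite monM; exists (a + a')%N, (b + b')%N, (c + c'); split => //; lia.
Qed.

Lemma mon_ideal_le e o o' A : (o' <= o)%N -> mon_ideal e o A -> mon_ideal e o' A.
Proof.
move=> oo; apply: gen_ideal_min; [exact: gen_ideal0|exact: gen_idealD|exact: gen_idealMl|].
by move=> _ [a [b [c [h1 h2 ->]]]]; apply: mon_ideal_mon => //; lia.
Qed.

Lemma mon_idealX n u : mon_ideal 1 1 u -> mon_ideal n n (u ^+ n).
Proof.
move=> Mu; elim: n => [|n IH].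
  rewrite expr0 (_ : 1 = mon 0 0 0); first exact: mon_ideal_mon.
  by rewrite /mon !expr0 !mulr1.
by rewrite exprS; apply: (mon_idealM Mu IH) => //; lia.
Qed.

Lemma mon_ideal_coord_pt b : mon_ideal 1 1 (lin (coord_pt b)).
Proof.
rewrite lin_coord_pt; case: b.
  by have := @mon_ideal_mon 1 1 0 1 0; rewrite /mon !expr0 expr1 mul1r mulr1; apply.
by have := @mon_ideal_mon 1 1 0 0 1; rewrite /mon !expr0 expr1 !mul1r; apply.
Qed.

Lemma mon_ideal_x1x2 : mon_ideal 2 2 (x1 * x2).
Proof.
rewrite -(lin_coord_ptMN true).
exact: (mon_idealM (mon_ideal_coord_pt _) (mon_ideal_coord_pt _)).
Qed.

Lemma expand_mcoef F : F = \sum_(k < size F) \sum_(j < size F`_k)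
   \sum_(i < size F`_k`_j) cst (mcoef F i j k) * mon i j k.
Proof.
rewrite -{1}[F]coefK poly_def; apply: eq_bigr => k _.
rewrite -mul_polyC -{1}[F`_k]coefK poly_def rmorph_sum mulr_suml; apply: eq_bigr => j _.
rewrite -mul_polyC !rmorphM -{1}[F`_k`_j]coefK poly_def !rmorph_sum !mulr_suml.
apply: eq_bigr => i _.
by rewrite -mul_polyC /cst /mon /mcoef /x0 /x1 /x2 !rmorphM !rmorphXn /=; ring.
Qed.

Lemma homog_mon_ideal d F : homog d F -> mon_ideal d 0 F.
Proof.
move=> hF; rewrite (expand_mcoef F).
apply: big_ind => [|A B|k _]; [exact: gen_ideal0|exact: gen_idealD|].
apply: big_ind => [|A B|j _]; [exact: gen_ideal0|exact: gen_idealD|].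
apply: big_ind => [|A B|i _]; [exact: gen_ideal0|exact: gen_idealD|].
have [->|Fijk] := eqVneq (mcoef F i j k) 0; first by rewrite cst0 mul0r; exact: gen_ideal0.
by apply/gen_idealMl/mon_ideal_mon; rewrite ?(hF _ _ _ Fijk).
Qed.

Lemma ideal_pt_coord_pt q b : proj_eq q (coord_pt b) -> ideal_pt q (lin (coord_pt (~~ b))).
Proof. by move=> qb; apply/ideal_pt_lin/(heval_lin_proj qb); rewrite heval_coord_pt; case: (b). Qed.

Lemma ideal_powX (I : R -> Prop) n f : I f -> ideal_pow I n (f ^+ n).
Proof.
move=> If; have := @ideal_pow_prod I (nseq n f); rewrite size_nseq prod_nseq; apply=> g.
by rewrite mem_nseq => /andP[_ /eqP->].
Qed.

Definition lead_x0 (p : nat) H := exists2 al : K, al != 0 & mon_ideal p 1 (H - cst al * x0 ^+ p).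

Lemma mon_ideal_x0X p : mon_ideal p 0 (x0 ^+ p).
Proof.
have -> : x0 ^+ p = mon p 0 0 by rewrite /mon !expr0 !mulr1.
by apply: mon_ideal_mon; rewrite ?addn0.
Qed.

Lemma lead_x0_mon_ideal p H : lead_x0 p H -> mon_ideal p 0 H.
Proof.
move=> [al _ MH]; rewrite -(subrK (cst al * x0 ^+ p) H).
by apply: gen_idealD; [apply: mon_ideal_le MH | apply/gen_idealMl/mon_ideal_x0X].
Qed.

Lemma lead_x0_lin l : c0 l != 0 -> lead_x0 1 (lin l).
Proof.
move=> l0; exists (c0 l) => //.
have -> : lin l - cst (c0 l) * x0 ^+ 1 =
    cst (c1 l) * lin (coord_pt true) + cst (c2 l) * lin (coord_pt false).
  by rewrite !lin_coord_pt /lin expr1; ring.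
by apply: gen_idealD; apply/gen_idealMl/mon_ideal_coord_pt.
Qed.

Lemma lead_x0M p1 p2 H1 H2 : lead_x0 p1 H1 -> lead_x0 p2 H2 -> lead_x0 (p1 + p2) (H1 * H2).
Proof.
move=> [al1 al1_0 MH1] LH2; have [al2 al2_0 MH2] := LH2.
exists (al1 * al2); first by rewrite mulf_neq0.
have -> : H1 * H2 - cst (al1 * al2) * x0 ^+ (p1 + p2) =
    (H1 - cst al1 * x0 ^+ p1) * H2 + cst al1 * (x0 ^+ p1 * (H2 - cst al2 * x0 ^+ p2)).
  by rewrite cstM exprD; ring.
apply: gen_idealD; first by apply: (mon_idealM MH1 (lead_x0_mon_ideal LH2)) => //; lia.
by apply/gen_idealMl/(mon_idealM (mon_ideal_x0X p1) MH2).
Qed.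

Lemma lead_x0_1 : lead_x0 0 1.
Proof. by exists 1; rewrite ?oner_eq0 // cst1 expr0 mulr1 subrr; apply: gen_ideal0. Qed.

Lemma lead_x0X n p H : lead_x0 p H -> lead_x0 (n * p) (H ^+ n).
Proof.
by move=> LH; elim: n => [|n IH]; [exact: lead_x0_1 | rewrite mulSn exprS; apply: lead_x0M].
Qed.

Lemma lead_x0_prod (T : eqType) (rs : seq T) (d : T -> nat) (F : T -> R) :
  (forall i, i \in rs -> lead_x0 (d i) (F i)) ->
  lead_x0 (\sum_(i <- rs) d i) (\prod_(i <- rs) F i).
Proof.
elim: rs => [|i rs IH] LF; first by rewrite !big_nil; exact: lead_x0_1.
rewrite !big_cons; apply: lead_x0M; first by apply: LF; rewrite mem_head.
by apply: IH => j jrs; apply: LF; rewrite in_cons jrs orbT.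
Qed.

Lemma mul_lead_x0 e o p A H : mon_ideal e o A -> lead_x0 p H ->
  exists2 al : K, al != 0 & mon_ideal (e + p) o.+1 (A * H - cst al * (x0 ^+ p * A)).
Proof.
move=> MA [al al0 MH]; exists al => //.
have -> : A * H - cst al * (x0 ^+ p * A) = A * (H - cst al * x0 ^+ p) by ring.
by apply: (mon_idealM MA MH) => //; lia.
Qed.

Lemma prod_lin_expand (T : Type) u v (al be : T -> K) y0 (rs : seq T) :
  mon_ideal 1 1 u -> mon_ideal 1 1 v ->
  exists2 B, mon_ideal (size rs) (size rs) B &
    \prod_(y <- y0 :: rs) (cst (al y) * u + v * cst (be y)) =
    cst (\prod_(y <- y0 :: rs) al y) * u ^+ (size rs).+1 + v * B.
Proof.
move=> Mu Mv; elim: rs y0 => [|y1 rs IH] y0.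
  exists (cst (be y0)); last by rewrite !big_seq1 expr1.
  by rewrite -[cst _]mulr1 -(expr0 u); apply/gen_idealMl/mon_idealX.
have [B MB eB] := IH y1.
exists (cst (be y0 * \prod_(y <- y1 :: rs) al y) * u ^+ (size rs).+1
        + (cst (al y0) * u + v * cst (be y0)) * B).
  apply: gen_idealD; first exact/gen_idealMl/mon_idealX.
  apply: (@mon_idealM 1 1 _ _ _ _ _ _ _ MB) => //.
  by apply: gen_idealD; [apply: gen_idealMl Mu | apply: gen_idealMr Mv].
rewrite big_cons eB [\prod_(y <- y0 :: _) al y]big_cons.
by rewrite /= [u ^+ (size rs).+2]exprS !cstM; ring.
Qed.

Lemma prod_lin_cross_e0 (b : bool) q0 rs : exists2 B, mon_ideal (size rs) (size rs) B &
  \prod_(q <- q0 :: rs) lin (cross (1, 0, 0) q) =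
  cst (\prod_(q <- q0 :: rs) ((-1) ^+ b * heval q (lin (coord_pt (~~ b)))))
    * lin (coord_pt b) ^+ (size rs).+1 + lin (coord_pt (~~ b)) * B.
Proof.
rewrite (eq_bigr _ (fun q _ => lin_cross_e0 b q)).
by apply: prod_lin_expand; apply: mon_ideal_coord_pt.
Qed.

Lemma sum_sub_count (T : Type) (a : pred T) (rs : seq T) n : (0 < n)%N ->
  (\sum_(i <- rs) (n - a i) + count a rs = n * size rs)%N.
Proof.
move=> n0; elim: rs => [|x rs IH]; first by rewrite big_nil muln0.
by rewrite big_cons /= mulnS; move: IH; case: (a x) => /=; lia.
Qed.

Lemma count_mem_sub (T : eqType) (ex rs : seq T) :
  uniq ex -> uniq rs -> {subset ex <= rs} -> count (fun x => x \in ex) rs = size ex.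
Proof.
move=> uex urs sub; rewrite -size_filter; apply/perm_size/uniq_perm; rewrite ?filter_uniq //.
by move=> x; rewrite mem_filter; apply/andP/idP => [[]//|xe]; split=> //; apply: sub.
Qed.

Section Configuration.
Variables (s : nat) (Xs : nat -> seq (pt K)) (L : nat -> pt K) (P : pt K) (m : nat).
Hypothesis s_ge2 : (2 <= s)%N.
Hypothesis m_gt_s : (s + 1 <= m)%N.
Hypothesis size_Xs : forall i, (1 <= i <= s)%N -> size (Xs i) = i.
Hypothesis Xs_on_L : forall i q, (1 <= i <= s)%N -> q \in Xs i -> on_line (L i) q.
Hypothesis L_avoids_Xs :
  forall i j q, (1 < i <= s)%N -> (1 <= j < i)%N -> q \in Xs j -> ~~ on_line (L i) q.
Hypothesis Xs1 : Xs 1%N = [:: P].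
Hypothesis P_e0 : proj_eq P (1, 0, 0).
Hypothesis Xs2_e1 : exists2 q, q \in Xs 2%N & proj_eq q (0, 1, 0).
Hypothesis Xs2_e2 : exists2 q, q \in Xs 2%N & proj_eq q (0, 0, 1).
Hypothesis few_on_lines_P : forall l, nzpt l -> on_line l P ->
  (count (on_line l) (flatten [seq Xs i | i <- iota 1 s]) < s)%N.

Local Notation Y := (flatten [seq Xs i | i <- iota 2 s.-1]).
Local Notation N := (m * s.-1 - 1)%N.

Definition J := ideal_add (ideal_fat m Y) (ideal_pow (ideal_pt P) m).

Lemma J0 : J 0.
Proof. by exists 0, 0; rewrite addr0; split=> //; split=> [q _|]; apply: gen_ideal0. Qed.

Lemma JD A B : J A -> J B -> J (A + B).
Proof.
move=> [A1 [A2 [-> [YA1 PA2]]]] [B1 [B2 [-> [YB1 PB2]]]].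
exists (A1 + B1), (A2 + B2); split; first by rewrite addrACA.
by split=> [q qY|]; apply: gen_idealD => //; [apply: YA1 | apply: YB1].
Qed.

Lemma JMl r A : J A -> J (r * A).
Proof.
move=> [A1 [A2 [-> [YA1 PA2]]]]; exists (r * A1), (r * A2); rewrite mulrDr.
by split=> //; split=> [q qY|]; apply: gen_idealMl => //; apply: YA1.
Qed.

Lemma JB A B : J A -> J B -> J (A - B).
Proof. by move=> JA JB; rewrite -mulN1r; apply/JD/JMl. Qed.

Lemma J_gen_ideal S A : (forall g, S g -> J g) -> gen_ideal S A -> J A.
Proof. by move=> SJ; apply: (gen_ideal_min J0 JD JMl SJ). Qed.

Lemma J_cst_cancel a A : a != 0 -> J (cst a * A) -> J A.
Proof. by move=> a0 /(JMl (cst a^-1)); rewrite mulrA -cstM mulVf // cst1 mul1r. Qed.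

Lemma J_fat A : ideal_fat m Y A -> J A.
Proof. by move=> YA; exists A, 0; rewrite addr0; split=> //; split=> //; apply: gen_ideal0. Qed.

Lemma J_pow_P A : ideal_pow (ideal_pt P) m A -> J A.
Proof. by move=> PA; exists 0, A; rewrite add0r; split=> //; split=> // q _; apply: gen_ideal0. Qed.

Lemma m_gt0 : (0 < m)%N. Proof. lia. Qed.

Lemma ms_split : (m * s = m * s.-1 + m)%N.
Proof. by rewrite -mulnSr prednK //; lia. Qed.

Lemma m_le_ms : (m <= m * s.-1)%N.
Proof. by apply: leq_pmulr; lia. Qed.

Lemma heval_P_coord_pt b : heval P (lin (coord_pt b)) = 0.
Proof.
apply: (heval_lin_proj P_e0).
by rewrite heval_lin; case: b; rewrite /c0 /c1 /c2 /=; ring.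
Qed.

Lemma L_x0_neq0 i : (2 <= i <= s)%N -> c0 (L i) != 0.
Proof.
move=> i2s; have := @L_avoids_Xs i 1 P; rewrite Xs1 mem_head on_lineE => /(_ _ _ isT).
have P0 : heval P (lin (L i)) = c0 (L i) * c0 P.
  have [t [_ [_ [P1 P2]]]] := P_e0; rewrite heval_lin P1 P2 /c1 /c2 /=; ring.
by rewrite P0 mulf_eq0 negb_or => /(_ _ _)/andP[] //; lia.
Qed.

Lemma Xs2_coord_pt b q : q \in Xs 2 -> proj_eq q (coord_pt b) \/ proj_eq q (coord_pt (~~ b)).
Proof.
move=> qX2; have [q1 q1X2 q1e1] := Xs2_e1; have [q2 q2X2 q2e2] := Xs2_e2.
have q1q2 : q1 != q2.
  apply/eqP => q12; move: q1e1 q2e2; rewrite q12 => -[t [t0 [_ [e1 _]]]] [t' [_ [_ [e1' _]]]].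
  by move: t0; rewrite -(mulr1 t) -e1 e1' /c1 /= mulr0 eqxx.
have : q = q1 \/ q = q2.
  have := @size_Xs 2 ltac:(lia); move: qX2 q1X2 q2X2 q1q2.
  case: (Xs 2) => [|a [|a' []]] //= /[!inE].
  by do 3!case/orP=> /eqP->; rewrite ?eqxx //; tauto.
by case: b => -[]->; tauto.
Qed.

Lemma mem_Y q : q \in Y -> exists2 i, (2 <= i <= s)%N & q \in Xs i.
Proof. by move=> /flatten_mapP [i]; rewrite mem_iota => i2s qi; exists i => //; lia. Qed.

Lemma size_le_sumn (ns : seq nat) : all (leq 1) ns -> (size ns <= sumn ns)%N.
Proof. by elim: ns => //= n ns IH /andP[n1 /IH]; lia. Qed.

(* Such a line meets X_1 and X_2 and has fewer than s points of X, so it misses a later layer. *)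
Lemma line_P_misses_layer l : nzpt l -> on_line l P -> has (on_line l) (Xs 2) ->
  exists2 k, (3 <= k <= s)%N & forall Q, Q \in Xs k -> ~~ on_line l Q.
Proof.
move=> l_nz lP lX2.
have [/hasP[k] /[!mem_iota] k3s /allP lk | /hasPn all_meet] :=
  boolP (has (fun k => all (fun Q => ~~ on_line l Q) (Xs k)) (iota 3 (s - 2))).
  by exists k => //; lia.
have := few_on_lines_P l_nz lP; rewrite count_flatten -map_comp ltnNge => /negP[].
rewrite -{1}(size_iota 1 s) -(size_map (count (on_line l) \o Xs)); apply: size_le_sumn.
apply/allP => _ /mapP[i /[!mem_iota] i1s ->] /=; rewrite -has_count.
have [->|i1] := eqVneq i 1%N; first by rewrite Xs1 /= lP.
have [->//|i2] := eqVneq i 2%N.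
have /allPn[Q QXi /negPn lQ] := all_meet i ltac:(rewrite mem_iota; lia).
by apply/hasP; exists Q.
Qed.

Definition Lprod (ex : seq nat) : R := \prod_(i <- iota 2 s.-1) lin (L i) ^+ (m - (i \in ex)).

Lemma lead_x0_Lprod ex : uniq ex -> {subset ex <= iota 2 s.-1} ->
  lead_x0 (m * s.-1 - size ex) (Lprod ex).
Proof.
move=> uex ex_sub.
have <- : (\sum_(i <- iota 2 s.-1) (m - (i \in ex)) = m * s.-1 - size ex)%N.
  have := sum_sub_count (fun i => i \in ex) (iota 2 s.-1) m_gt0.
  by rewrite count_mem_sub ?iota_uniq // size_iota => <-; rewrite addnK.
apply: lead_x0_prod => i /[!mem_iota] i2s.
have := @lead_x0X (m - (i \in ex)) 1 (lin (L i)); rewrite muln1; apply.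
by apply/lead_x0_lin/L_x0_neq0; lia.
Qed.

Lemma fat_Lprod ex A :
  (forall i q, (2 <= i <= s)%N -> i \in ex -> q \in Xs i -> ideal_pt q A) ->
  ideal_fat m Y (A * Lprod ex).
Proof.
move=> exA q /mem_Y[i i2s qXi].
have Lq : ideal_pt q (lin (L i)).
  by apply/ideal_pt_lin/eqP; rewrite -on_lineE; apply: Xs_on_L qXi; lia.
rewrite /Lprod (big_rem i) /=; last by rewrite mem_iota; lia.
case: (boolP (i \in ex)) => iex /=.
  by rewrite mulrA mulrC subn1; apply/gen_idealMl/(ideal_pow_mulX m_gt0 (exA _ _ i2s iex qXi) Lq).
by rewrite mulrCA subn0; apply/gen_idealMr/ideal_powX.
Qed.

Lemma J_mon_high a b c : (m <= b + c)%N -> J (mon a b c).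
Proof.
move=> mbc; apply: J_pow_P; pose k := minn b m.
have [eb ec] : b = (b - k + k)%N /\ c = (c - (m - k) + (m - k))%N by rewrite /k; lia.
have -> : mon a b c = x0 ^+ a * x1 ^+ (b - k) * x2 ^+ (c - (m - k)) * (x1 ^+ k * x2 ^+ (m - k)).
  by rewrite /mon {1}eb {1}ec !exprD; ring.
apply/gen_idealMl/ideal_pow_XX; first exact: geq_minr.
  by rewrite -(lin_coord_pt true); apply/ideal_pt_lin/heval_P_coord_pt.
by rewrite -(lin_coord_pt false); apply/ideal_pt_lin/heval_P_coord_pt.
Qed.

Lemma J_mon_ideal_high e o A : (m <= o)%N -> mon_ideal e o A -> J A.
Proof. by move=> mo; apply: J_gen_ideal => _ [a [b [c [_ obc ->]]]]; apply: J_mon_high; lia. Qed.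

Lemma J_x0X_mul e o p A H : mon_ideal e o A -> lead_x0 p H ->
  (forall Z, mon_ideal (e + p) o.+1 Z -> J Z) -> J (A * H) -> J (x0 ^+ p * A).
Proof.
move=> MA LH JZ JAH; have [al al0 /JZ JAHx] := mul_lead_x0 MA LH.
apply: (J_cst_cancel al0).
have -> : cst al * (x0 ^+ p * A) = A * H - (A * H - cst al * (x0 ^+ p * A)) by ring.
exact: JB.
Qed.

Lemma J_x0X_top p A H : mon_ideal (m - 1) (m - 1) A -> lead_x0 p H -> J (A * H) ->
  J (x0 ^+ p * A).
Proof. by move=> MA LH; apply: J_x0X_mul MA LH _ => Z; apply: J_mon_ideal_high; lia. Qed.

Lemma ideal_pt_x1x2 q : q \in Xs 2 -> ideal_pt q (x1 * x2).
Proof.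
rewrite -(lin_coord_ptMN true) => /(Xs2_coord_pt true)[] /ideal_pt_coord_pt.
  exact: gen_idealMl.
exact: gen_idealMr.
Qed.

Lemma J_mixed w : mon_ideal (m - 3) (m - 3) w -> J (x0 ^+ N * (x1 * x2 * w)).
Proof.
move=> Mw; apply: (@J_x0X_top _ _ (Lprod [:: 2%N])).
- by apply: (mon_idealM mon_ideal_x1x2 Mw); lia.
- by apply: lead_x0_Lprod => // i /[!inE] /eqP->; rewrite mem_iota; lia.
apply/J_fat/fat_Lprod => i q _ /[!inE] /eqP-> qX2.
exact/gen_idealMr/ideal_pt_x1x2.
Qed.

Lemma corner_layer b : exists k Q1 q0 rs, [/\ (3 <= k <= s)%N, Xs k = [:: Q1, q0 & rs],
  size rs = (k - 2)%N & forall Q, Q \in Xs k -> heval Q (lin (coord_pt (~~ b))) != 0].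
Proof.
have [E EX2 Eb] : exists2 E, E \in Xs 2 & proj_eq E (coord_pt b) by case: b.
have lP : on_line (coord_pt (~~ b)) P by rewrite on_lineE heval_P_coord_pt.
have lX2 : has (on_line (coord_pt (~~ b))) (Xs 2).
  apply/hasP; exists E; rewrite // on_lineE; apply/eqP/(heval_lin_proj Eb).
  by rewrite heval_coord_pt; case: (b).
have [k k3s miss] := line_P_misses_layer (@nzpt_coord_pt (~~ b)) lP lX2.
have := @size_Xs k ltac:(lia); case Xk: (Xs k) => [|Q1 [|q0 rs]] /= sk; [lia..|].
exists k, Q1, q0, rs; split=> //; first lia.
by move=> Q; move: (miss Q); rewrite Xk on_lineE.
Qed.

Lemma lead_x0_corner b k Q : (3 <= k <= s)%N -> heval Q (lin (coord_pt (~~ b))) != 0 ->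
  lead_x0 N (lin (cross Q (coord_pt b)) * Lprod [:: 2%N; k]).
Proof.
move=> k3s Q_nz; have -> : N = (1 + (m * s.-1 - size [:: 2%N; k]))%N.
  by have := m_le_ms; rewrite /=; lia.
apply: lead_x0M.
  by apply: lead_x0_lin; rewrite c0_cross_coord_pt mulf_neq0 ?signr_eq0.
apply: lead_x0_Lprod => [|i /[!inE] /orP[]/eqP->]; rewrite ?mem_iota /=; [|lia..].
by rewrite inE andbT; apply/eqP; lia.
Qed.

Lemma J_corner b : J (x0 ^+ N * lin (coord_pt b) ^+ (m - 1)).
Proof.
have [k [Q1 [q0 [rs [k3s Xk srs v_nz]]]]] := corner_layer b.
have [B MB eprod] := prod_lin_cross_e0 b q0 rs.
pose u := lin (coord_pt b); pose v := lin (coord_pt (~~ b)); rewrite -/u -/v in eprod v_nz *.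
pose ga := \prod_(q <- q0 :: rs) ((-1) ^+ b * heval q v); rewrite -/ga in eprod.
have ga_nz : ga != 0.
  rewrite prodf_seq_neq0; apply/allP => q qrs /=.
  by rewrite mulf_neq0 ?signr_eq0 // v_nz // Xk in_cons qrs orbT.
have u_split : u ^+ (m - k) = u * u ^+ (m - k).-1 by rewrite -exprS prednK //; lia.
pose w := u ^+ (m - k).-1 * B.
have Mw : mon_ideal (m - 3) (m - 3) w.
  by apply: (mon_idealM (mon_idealX _ (mon_ideal_coord_pt b)) MB); lia.
(* A = u^(m-k) times the lines joining P to the points of X_k other than Q1. *)
pose A := u ^+ (m - k) * \prod_(q <- q0 :: rs) lin (cross (1, 0, 0) q).
have eA : A = cst ga * u ^+ (m - 1) + x1 * x2 * w.
  rewrite /A eprod -(lin_coord_ptMN b) -/u -/v /w u_split.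
  have -> : u ^+ (m - 1) = u * u ^+ (m - k).-1 * u ^+ (size rs).+1.
    by rewrite -exprS -exprD; congr (_ ^+ _); lia.
  ring.
have MA : mon_ideal (m - 1) (m - 1) A.
  rewrite eA; apply: gen_idealD; first exact/gen_idealMl/mon_idealX/mon_ideal_coord_pt.
  by apply: (mon_idealM mon_ideal_x1x2 Mw); lia.
have LH := lead_x0_corner k3s (v_nz Q1 ltac:(by rewrite Xk mem_head)).
have JAH : J (A * (lin (cross Q1 (coord_pt b)) * Lprod [:: 2%N; k])).
  rewrite mulrA; apply/J_fat/fat_Lprod => i q _ /[!inE] /orP[]/eqP-> qXi.
    case: (Xs2_coord_pt b qXi) => [qb | /ideal_pt_coord_pt].
      by apply/gen_idealMl/ideal_pt_lin/(heval_lin_proj qb)/heval_cross_r.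
    by rewrite negbK -/u => uq; rewrite /A u_split -!mulrA; apply: gen_idealMr.
  move: qXi; rewrite Xk inE => /orP[/eqP-> | qrs].
    by apply/gen_idealMl/ideal_pt_lin/heval_cross_l.
  apply: gen_idealMr; apply/gen_idealMl/(gen_ideal_prod qrs).
  exact/ideal_pt_lin/heval_cross_r.
apply: (J_cst_cancel ga_nz).
have -> : cst ga * (x0 ^+ N * u ^+ (m - 1)) = x0 ^+ N * A - x0 ^+ N * (x1 * x2 * w).
  by rewrite eA; ring.
exact: JB (J_x0X_top MA LH JAH) (J_mixed Mw).
Qed.

Lemma J_top w : mon_ideal (m - 1) (m - 1) w -> J (x0 ^+ N * w).
Proof.
apply: (@gen_ideal_min _ (fun w => J (x0 ^+ N * w))) => [|A B|r A|_ [a [b [c [abc bc ->]]]]].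
- by rewrite mulr0; exact: J0.
- by rewrite mulrDr; apply: JD.
- by rewrite mulrCA; apply: JMl.
have a0 : a = 0%N by lia.
have [b0|b_gt0] := posnP b.
  have -> : mon a b c = lin (coord_pt false) ^+ (m - 1).
    by rewrite lin_coord_pt /mon a0 b0 !expr0 !mul1r; congr (_ ^+ _); lia.
  exact: J_corner.
have [c_eq0|c_gt0] := posnP c.
  have -> : mon a b c = lin (coord_pt true) ^+ (m - 1).
    by rewrite lin_coord_pt /mon a0 c_eq0 !expr0 mul1r mulr1; congr (_ ^+ _); lia.
  exact: J_corner.
have -> : mon a b c = x1 * x2 * mon 0 b.-1 c.-1.
  by rewrite /mon a0 !expr0 !mul1r -{1}(prednK b_gt0) -{1}(prednK c_gt0) !exprS; ring.
by apply/J_mixed/mon_ideal_mon; lia.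
Qed.

Lemma J_mon_weight t a b c :
  (a + b + c = m * s - 2)%N -> (m - 1 - t <= b + c)%N -> J (mon a b c).
Proof.
have := ms_split; have := m_le_ms.
elim: t a b c => [|t IH] a b c ms1 ms2 abc bct.
  have [mbc|bc_lt] := leqP m (b + c); first exact: J_mon_high.
  have -> : mon a b c = x0 ^+ N * mon 0 b c by rewrite x0X_mon addn0; congr mon; lia.
  by apply/J_top/mon_ideal_mon; lia.
have [|bc_lt] := leqP (m - 1 - t) (b + c); first exact: IH.
have -> : mon a b c = x0 ^+ (m * s.-1) * mon (m - 2 - (b + c)) b c.
  by rewrite x0X_mon; congr mon; lia.
apply: (@J_x0X_mul (m - 2) (b + c) _ _ (Lprod [::])).
- by apply: mon_ideal_mon; lia.
- by have := @lead_x0_Lprod [::] isT (fun _ => ltac:(done)); rewrite subn0.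
- move=> Z; apply: J_gen_ideal => _ [a' [b' [c' [abc' bc' ->]]]].
  by apply: IH => //; lia.
by apply/J_fat/fat_Lprod => i q _.
Qed.

Lemma J_homog F : homog (m * s - 2) F -> J F.
Proof.
move=> /homog_mon_ideal; apply: J_gen_ideal => _ [a [b [c [abc _ ->]]]].
by apply: (@J_mon_weight (m - 1)) => //; lia.
Qed.

End Configuration.
End Plane.

Theorem mainTheorem14 (K : closedFieldType) (s : nat)
    (Xs : nat -> seq (pt K)) (L : nat -> pt K) (P : pt K) :
  (2 <= s)%N ->
  let X := flatten [seq Xs i | i <- iota 1 s] in
  distinct_pts X ->
  (forall i, (1 <= i <= s)%N -> size (Xs i) = i) ->
  (forall i, (1 <= i <= s)%N -> nzpt (L i)) ->
  (forall i j, (1 <= i <= s)%N -> (1 <= j <= s)%N -> i <> j -> ~ proj_eq (L i) (L j)) ->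
  (forall i q, (1 <= i <= s)%N -> q \in Xs i -> on_line (L i) q) ->
  (forall i j q, (1 < i <= s)%N -> (1 <= j < i)%N -> q \in Xs j -> ~~ on_line (L i) q) ->
  Xs 1%N = [:: P] ->
  proj_eq P (1, 0, 0) ->
  (exists2 q, q \in Xs 2%N & proj_eq q (0, 1, 0)) ->
  (exists2 q, q \in Xs 2%N & proj_eq q (0, 0, 1)) ->
  (forall l : pt K, nzpt l -> on_line l P -> (count (on_line l) X < s)%N) ->
  let Y := flatten [seq Xs i | i <- iota 2 s.-1] in
  forall m : nat, (s + 1 <= m)%N ->
  forall F : mpoly K, homog (m * s - 2) F ->
    ideal_add (ideal_fat m Y) (ideal_pow (ideal_pt P) m) F.
Proof.
move=> s_ge2 X _ size_Xs _ _ Xs_on_L L_avoids_Xs Xs1 P_e0 Xs2_e1 Xs2_e2 few_on_lines_P Y.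
move=> m m_gt_s F homF.
exact: (J_homog s_ge2 m_gt_s size_Xs Xs_on_L L_avoids_Xs Xs1 P_e0 Xs2_e1 Xs2_e2
  few_on_lines_P homF).
Qed.
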